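(* For all $a,b,c,d\in\mathbb Z$: $a:b::_{SY}c:d$ if and only if $a:b::_m c:d$ holds in $(\mathbb Z,+,\mathbb Z)$.
   Context: $a:b::_{SY}c:d$ means: there exist $k,\ell,o,u\in\mathbb Z$ with $a=k+o$, $b=\ell+o$, $c=k+u$, $d=\ell+u$. $(\mathbb Z,+,\mathbb Z)$ is the algebra with universe $\mathbb Z$, addition, and every integer as a constant. A justification is a pair of terms $s\to t$ with the variables of $t$ among those of $s$; monolinear justifications are those where $s,t$ contain only one fixed variable $x$, occurring at most once in $s$ and at most once in $t$. $\uparrow^m(a\to b)$ is the set of monolinear justifications $s\to t$ with $a=s(\mathbf o)$, $b=t(\mathbf o)$ for some value $\mathbf o$; $\uparrow^m(a\to b:\!\cdot\,c\to d):=\uparrow^m(a\to b)\cap\uparrow^m(c\to d)$. A monolinear justification is trivial if it lies in all sets $\uparrow^m(a'\to b':\!\cdot\,c'\to d')$. $a\to b:\!\cdot_m\,c\to d$ holds iff either (i) all justifications in $\uparrow^m(a\to b)\cup\uparrow^m(c\to d)$ are trivial, or (ii) $J_d:=\uparrow^m(a\to b:\!\cdot\,c\to d)$ contains a non-trivial justification and for every $d'$, $J_d\subseteq J_{d'}$ implies $J_{d'}$ contains a non-trivial justification and $J_{d'}\subseteq J_d$ (ignoring trivial justifications). $a:b::_m c:d$ iff $a\to b:\!\cdot_m\,c\to d$, $b\to a:\!\cdot_m\,d\to c$, $c\to d:\!\cdot_m\,a\to b$, $d\to c:\!\cdot_m\,b\to a$ all hold. *)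

From Stdlib Require Import ZArith Lia.
Open Scope Z_scope.

(** Terms of the algebra (Z, +, Z) over the single fixed variable x:
    the variable, an integer constant, or a sum of two terms. *)
Inductive term : Type :=
| TX : term
| TC : Z -> term
| TP : term -> term -> term.

Fixpoint eval (s : term) (o : Z) : Z :=
  match s with
  | TX => o
  | TC z => z
  | TP s1 s2 => eval s1 o + eval s2 o
  end.

Fixpoint occ (s : term) : nat :=
  match s with
  | TX => 1%nat
  | TC _ => 0%nat
  | TP s1 s2 => (occ s1 + occ s2)%nat
  end.

(** A justification is a pair s -> t; monolinear: x occurs at most once in s,
    at most once in t, and the variables of t are among those of s. *)
Definition justification := (term * term)%type.

Definition monolinear (j : justification) : Prop :=
  (occ (fst j) <= 1)%nat /\ (occ (snd j) <= 1)%nat /\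
  ((0 < occ (snd j))%nat -> (0 < occ (fst j))%nat).

Definition upm (a b : Z) (j : justification) : Prop :=
  monolinear j /\ exists o : Z, eval (fst j) o = a /\ eval (snd j) o = b.

Definition upm2 (a b c d : Z) (j : justification) : Prop :=
  upm a b j /\ upm c d j.

Definition trivialJ (j : justification) : Prop :=
  monolinear j /\ forall a' b' c' d' : Z, upm2 a' b' c' d' j.

Definition arrow_m (a b c d : Z) : Prop :=
  (forall j, (upm a b j \/ upm c d j) -> trivialJ j)
  \/
  ((exists j, upm2 a b c d j /\ ~ trivialJ j) /\
   forall d' : Z,
     (forall j, upm2 a b c d j /\ ~ trivialJ j -> upm2 a b c d' j /\ ~ trivialJ j) ->
     (exists j, upm2 a b c d' j /\ ~ trivialJ j) /\
     (forall j, upm2 a b c d' j /\ ~ trivialJ j -> upm2 a b c d j /\ ~ trivialJ j)).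

Definition prop_m (a b c d : Z) : Prop :=
  arrow_m a b c d /\ arrow_m b a d c /\ arrow_m c d a b /\ arrow_m d c b a.

Definition prop_SY (a b c d : Z) : Prop :=
  exists k l o u : Z, a = k + o /\ b = l + o /\ c = k + u /\ d = l + u.

(** In (Z,+,Z) every term is affine, [eval s o = occ s * o + eval s 0], so a
    monolinear justification [s -> t] either maps every [a] to the constant
    [eval t 0] or shifts every [a] by the same offset.  Hence no monolinear
    justification is trivial, the target [d] of [c] is determined by any
    justification of [c -> d], and [a -> b :._m c -> d] holds exactly when some
    justification is shared, i.e. when [b = d] or [a - b = c - d].  Imposing this
    on both [a -> b :. c -> d] and [b -> a :. d -> c] leaves [a - b = c - d],
    which is exactly [a : b ::_SY c : d]. *)

From Stdlib Require Import ZArith Lia.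
Open Scope Z_scope.

Lemma eval_affine (s : term) (o : Z) :
  eval s o = Z.of_nat (occ s) * o + eval s 0.
Proof.
  induction s as [| z | s1 IHs1 s2 IHs2]; cbn [eval occ]; rewrite ?Nat2Z.inj_add; lia.
Qed.

Definition offset (j : justification) : Z :=
  eval (snd j) 0 - Z.of_nat (occ (snd j)) * eval (fst j) 0.

Lemma upm_offset (a b : Z) (j : justification) :
  upm a b j -> b = Z.of_nat (occ (snd j)) * a + offset j /\ (occ (snd j) <= 1)%nat.
Proof.
  destruct j as [s t]; unfold upm, monolinear, offset; cbn [fst snd].
  intros [[Hs [Ht Hts]] [o [<- <-]]].
  rewrite (eval_affine s o), (eval_affine t o).
  destruct (occ t) as [| [|]]; [| destruct (occ s) as [| [|]] |]; lia.
Qed.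

Lemma upm_functional (c d d' : Z) (j : justification) :
  upm c d j -> upm c d' j -> d = d'.
Proof.
  intros [Hd _]%upm_offset [Hd' _]%upm_offset. lia.
Qed.

Lemma not_trivialJ (j : justification) : ~ trivialJ j.
Proof.
  intros [_ Htriv].
  destruct (Htriv 0 (offset j + 1) 0 0) as [[Hb _]%upm_offset _]. lia.
Qed.

Lemma upm_const (a b : Z) : upm a b (TC a, TC b).
Proof.
  split; [unfold monolinear; cbn; lia | now exists 0].
Qed.

Lemma upm_to_const (a b : Z) : upm a b (TX, TC b).
Proof.
  split; [unfold monolinear; cbn; lia | now exists a].
Qed.

Lemma upm_shift (a b : Z) : upm a b (TX, TP TX (TC (b - a))).
Proof.
  split; [unfold monolinear; cbn; lia | exists a; cbn; split; lia].
Qed.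

Lemma upm2_ex_iff (a b c d : Z) :
  (exists j, upm2 a b c d j) <-> b = d \/ a - b = c - d.
Proof.
  split.
  - intros [j [[Hb Hocc]%upm_offset [Hd _]%upm_offset]].
    destruct (occ (snd j)) as [| [|]]; lia.
  - intros [<- | Hdiff].
    + exists (TX, TC b). split; apply upm_to_const.
    + exists (TX, TP TX (TC (b - a))). split; [apply upm_shift |].
      replace (b - a) with (d - c) by lia. apply upm_shift.
Qed.

Lemma arrow_m_iff (a b c d : Z) : arrow_m a b c d <-> b = d \/ a - b = c - d.
Proof.
  rewrite <- upm2_ex_iff. split.
  - intros [Hall | [[j [Hj _]] _]].
    + exfalso. apply (not_trivialJ (TC a, TC b)), Hall. left. apply upm_const.
    + now exists j.
  - intros [j Hj]. right. split; [exists j; split; [exact Hj | apply not_trivialJ] |].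
    intros d' Hsub.
    destruct (Hsub j (conj Hj (not_trivialJ j))) as [[_ Hd'] _].
    rewrite <- (upm_functional c d d' j (proj2 Hj) Hd').
    split; [exists j; split; [exact Hj | apply not_trivialJ] | tauto].
Qed.

Lemma prop_SY_iff (a b c d : Z) : prop_SY a b c d <-> a - b = c - d.
Proof.
  split.
  - intros (k & l & o & u & -> & -> & -> & ->). lia.
  - intros Hdiff. exists a, b, 0, (c - a). lia.
Qed.

Theorem mainTheorem7 : forall a b c d : Z, prop_SY a b c d <-> prop_m a b c d.
Proof.
  intros a b c d. unfold prop_m. rewrite prop_SY_iff, !arrow_m_iff. lia.
Qed.
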